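(* Let $(G,S)$ be a Cayley graph of a group of polynomial volume growth with homogeneous dimension $D$. Then for every (small) $\theta>0$ there exists $R_0(\theta,S)$ such that $$\frac{|B_p(R)|}{|B_p(r)|}\leq(1+\theta)\left(\frac{R}{r}\right)^D$$ for all $p\in G$ and all real $R\geq r\geq R_0(\theta,S)$.
   Context: For a group $G$ with finite symmetric generating set $S$, the Cayley graph has $x\sim y$ iff $x=ys$ for some $s\in S$, with word metric $d^S$ (shortest path length). $B_p(t)=\{x\in G: d^S(x,p)\leq t\}$ for real $t\ge0$, and $|B_p(t)|$ is its cardinality. $G$ has polynomial volume growth if $|B_e(n)|\leq Cn^A$ for some $C,A>0$ and all $n\geq1$. The homogeneous dimension is the integer $D$ for which $C_1n^D\leq|B_e(n)|\leq C_2n^D$ for all $n\ge1$ and some $C_1,C_2>0$; moreover $\lim_{n\to\infty}|B_e(n)|/n^D$ exists and is a finite positive constant. *)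

From HB Require Import structures.
From mathcomp Require Import all_boot all_order all_algebra.
From mathcomp Require Import all_classical all_reals all_analysis.
Set Implicit Arguments. Unset Strict Implicit. Unset Printing Implicit Defensive.
Import Order.TTheory GRing.Theory Num.Theory.
Local Open Scope ring_scope.

Definition is_group (G : Type) (mul : G -> G -> G) (inv : G -> G) (one : G) :=
  [/\ (forall x y z, mul x (mul y z) = mul (mul x y) z),
      (forall x, mul one x = x),
      (forall x, mul x one = x),
      (forall x, mul (inv x) x = one) &
      (forall x, mul x (inv x) = one)].

Definition wprod (G : Type) (mul : G -> G -> G) (one : G) (w : seq G) : G :=
  foldr mul one w.

Definition symmetric_gen (G : eqType) (mul : G -> G -> G) (inv : G -> G)
    (one : G) (S : seq G) :=
  (forall s, s \in S -> inv s \in S) /\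
  (forall x : G, exists w : seq G, all (mem S) w /\ x = wprod mul one w).

(* Word metric: d^S(x,p) <= t  iff  x = p s_1 ... s_k with s_i in S and k <= t
   (a path of length k in the Cayley graph, where x ~ y iff x = y s). *)
Definition in_ball (R : realType) (G : eqType) (mul : G -> G -> G) (one : G)
    (S : seq G) (p : G) (t : R) (x : G) : Prop :=
  exists w : seq G, [/\ all (mem S) w, (size w)%:R <= t & x = mul p (wprod mul one w)].

Fixpoint words (G : Type) (S : seq G) (k : nat) : seq (seq G) :=
  if k is k'.+1 then [seq s :: w | s <- S, w <- words S k'] else [:: [::]].

Definition ball_list (R : realType) (G : eqType) (mul : G -> G -> G) (one : G)
    (S : seq G) (p : G) (t : R) : seq G :=
  if t < 0 then [::] else
  undup [seq mul p (wprod mul one w) | k <- iota 0 (Num.truncn t).+1, w <- words S k].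

Definition ball_card (R : realType) (G : eqType) (mul : G -> G -> G) (one : G)
    (S : seq G) (p : G) (t : R) : nat :=
  size (ball_list mul one S p t).

Lemma ball_list_uniq (R : realType) (G : eqType) mul one (S : seq G) p (t : R) :
  uniq (ball_list mul one S p t).
Proof. by rewrite /ball_list; case: ifP => // _; exact: undup_uniq. Qed.

Lemma words_spec (G : eqType) (S : seq G) k w :
  (w \in words S k) = (all (mem S) w && (size w == k)).
Proof.
elim: k w => [|k IH] w /=.
  by rewrite mem_seq1 -size_eq0; case: w => [|s w] //=; rewrite andbF.
apply/allpairsPdep/idP.
  by case=> a [b [aS /[!IH] /andP[bS /eqP bk] ->]]; rewrite /= aS bS bk eqxx.
case: w => [|s w] //= /andP[/andP[sS wS] /eqP [sz]].
by exists s, w; split => //; rewrite IH wS sz eqxx.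
Qed.

Lemma mem_ball_list (R : realType) (G : eqType) mul one (S : seq G) p (t : R) x :
  x \in ball_list mul one S p t <-> in_ball mul one S p t x.
Proof.
rewrite /ball_list /in_ball; case: ifPn => [t0|].
  split => //; case=> w [_ le _].
  by have := lt_le_trans t0 (le_trans (ler0n _ _) le); rewrite ltxx.
rewrite -leNgt => t0; rewrite mem_undup; split.
  case/allpairsPdep=> k [w [kin /[!words_spec] /andP[wS /eqP sz] ->]].
  exists w; split => //; rewrite sz.
  by move: kin; rewrite mem_iota add0n ltnS truncn_ge_nat.
case=> w [wS le ->]; apply/allpairsPdep; exists (size w), w; split => //.
  rewrite mem_iota add0n ltnS /=.
  by rewrite truncn_ge_nat.
by rewrite words_spec wS eqxx.
Qed.

Definition poly_growth (R : realType) (G : eqType) (mul : G -> G -> G)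
    (one : G) (S : seq G) : Prop :=
  exists C A : R, [/\ 0 < C, 0 < A &
    forall n : nat, (1 <= n)%N ->
      (ball_card mul one S one (n%:R : R))%:R <= C * (n%:R `^ A)].

Definition homogeneous_dim (R : realType) (G : eqType) (mul : G -> G -> G)
    (one : G) (S : seq G) (D : nat) : Prop :=
  exists C1 C2 : R, [/\ 0 < C1, 0 < C2 &
    forall n : nat, (1 <= n)%N ->
      C1 * n%:R ^+ D <= (ball_card mul one S one (n%:R : R))%:R /\
      (ball_card mul one S one (n%:R : R))%:R <= C2 * n%:R ^+ D].

From HB Require Import structures.
From mathcomp Require Import all_boot all_order all_algebra.
From mathcomp Require Import all_classical all_reals all_analysis.
From mathcomp Require Import lra zify ring.
Import Order.TTheory GRing.Theory Num.Theory numFieldNormedType.Exports.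
Local Open Scope ring_scope.
Local Open Scope classical_set_scope.

(* Balls are translates of the ball at the identity and only depend on the
   integer part of the radius, so everything reduces to the sequence
   b n = |B_e(n)|, with b n ~ c n^D.  For large r, the integer parts of r and
   R are large, whence b (floor R) <= c (1 + eta) R^D and, by Bernoulli's
   inequality applied to floor r > r (1 - 1/r),
   b (floor r) >= c (1 - eta) (1 - D/r) r^D >= c (1 - eta)^2 r^D.
   Taking eta small compared with theta gives the bound. *)

Lemma ball_card_translate {R : realType} {G : eqType} {mul : G -> G -> G}
    {inv : G -> G} {one : G} : is_group mul inv one ->
  forall (S : seq G) p (t : R), ball_card mul one S p t = ball_card mul one S one t.
Proof.
case=> mulA mul1x _ mulVx _ S p t.
have mulp_inj : injective (mul p).
  by move=> x y /(congr1 (mul (inv p))); rewrite !mulA mulVx !mul1x.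
rewrite /ball_card /ball_list; case: ifP => // _.
set l := iota _ _.
have -> : [seq mul p (wprod mul one w) | k <- l, w <- words S k] =
          map (mul p) [seq mul one (wprod mul one w) | k <- l, w <- words S k].
  elim: l => //= k l IH; rewrite map_cat IH -map_comp; congr (_ ++ _).
  by apply: eq_map => w /=; rewrite mul1x.
by rewrite undup_map_inj // size_map.
Qed.

Lemma ball_card_truncn {R : realType} {G : eqType} {mul : G -> G -> G}
    {one : G} {S : seq G} {p : G} {t : R} : 0 <= t ->
  ball_card mul one S p t = ball_card mul one S p ((Num.truncn t)%:R : R).
Proof. by move=> t0; rewrite /ball_card /ball_list natrK !ltNge t0 ler0n. Qed.

Section Asymptotics.
Context {R : realType}.
Implicit Types (x r : R) (n D : nat).

Lemma bernoulli_subr x n : x <= 1 -> 1 - n%:R * x <= (1 - x) ^+ n.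
Proof.
move=> x1; elim: n => [|n IH]; first by rewrite mul0r subr0 expr0.
have x1' : 0 <= 1 - x by rewrite subr_ge0.
rewrite exprS -natr1; apply: le_trans (ler_wpM2l x1' IH).
have : 0 <= n%:R * x * x by rewrite -mulrA mulr_ge0 // -expr2 sqr_ge0.
lra.
Qed.

Lemma truncn_expn_ge r D : 1 <= r ->
  (1 - D%:R / r) * r ^+ D <= (Num.truncn r)%:R ^+ D.
Proof.
move=> r1; have r0 : 0 < r by lra.
have ir1 : r^-1 <= 1 by rewrite invf_le1.
have rE : r * (1 - r^-1) = r - 1 by rewrite mulrBr divff ?gt_eqF // mulr1.
have trunc_ge : r - 1 <= (Num.truncn r)%:R.
  by have := truncnS_gt r; rewrite -natr1; lra.
apply: le_trans (lerXn2r _ _ _ trunc_ge); rewrite ?nnegrE ?ler0n ?subr_ge0 //.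
rewrite -rE exprMn mulrC; apply: ler_wpM2l.
  exact: exprn_ge0 (ltW r0).
exact: bernoulli_subr.
Qed.

Lemma slack_for_ratio {theta : R} : 0 < theta ->
  exists2 eta : R, 0 < eta < 1 & 1 + eta <= (1 + theta) * (1 - eta) ^+ 2.
Proof.
move=> theta0; set eta := theta / (3 + 2 * theta).
have den0 : 0 < 3 + 2 * theta by lra.
have etaE : eta * (3 + 2 * theta) = theta by rewrite divfK // gt_eqF.
have eta0 : 0 < eta by rewrite divr_gt0.
exists eta; first by apply/andP; split=> //; nra.
rewrite -subr_ge0.
have -> : (1 + theta) * (1 - eta) ^+ 2 - (1 + eta) =
          (1 + theta) * eta ^+ 2 + (theta - eta * (3 + 2 * theta)) by ring.
by rewrite etaE subrr addr0; apply: mulr_ge0; [lra | exact: sqr_ge0].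
Qed.

Lemma cvg_normalized_bounds {b : nat -> R} {D} {c eta : R} : 0 < c -> 0 < eta ->
  (fun n => b n / n%:R ^+ D) @ \oo --> c ->
  exists N, forall n, (N < n)%N ->
    c * (1 - eta) * n%:R ^+ D <= b n <= c * (1 + eta) * n%:R ^+ D.
Proof.
move=> c0 eta0 bc; have ceta0 : 0 < c * eta by rewrite mulr_gt0.
have [N _ HN] := cvgr_dist_lt _ _ bc _ ceta0.
exists N => n Nn; have nD : 0 < n%:R ^+ D :> R by rewrite exprn_gt0 // ltr0n; lia.
have /= := HN n (ltnW Nn); rewrite ltr_norml => /andP[lo hi].
have -> : b n = b n / n%:R ^+ D * n%:R ^+ D by rewrite divfK // gt_eqF.
by apply/andP; split; apply: (ler_wpM2r (ltW nD)); lra.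
Qed.

Lemma ratio_truncn_le {b : nat -> R} {D} {c : R} : 0 < c ->
  (fun n => b n / n%:R ^+ D) @ \oo --> c ->
  forall theta : R, 0 < theta -> exists R0 : R, forall r r' : R, R0 <= r -> r <= r' ->
    b (Num.truncn r') / b (Num.truncn r) <= (1 + theta) * (r' / r) ^+ D.
Proof.
move=> c0 bc theta theta0.
have [eta /andP[eta0 eta1] slack] := slack_for_ratio theta0.
have [N bN] := cvg_normalized_bounds c0 eta0 bc.
exists (N.+1%:R + D%:R / eta) => r r' Nr rr'.
have D_eta : 0 <= D%:R / eta by rewrite divr_ge0 // ltW.
have N1 : 1 <= N.+1%:R :> R by rewrite ler1n.
have r1 : 1 <= r by lra.
have [r0 r'0] : 0 < r /\ 0 < r' by split; lra.
have Dr : D%:R / r <= eta.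
  by rewrite ler_pdivrMr // -ler_pdivrMl //; lra.
have N_trunc x : r <= x -> (N < Num.truncn x)%N.
  by move=> rx; rewrite truncn_gt_nat; lra.
have [_ upper] := andP (bN _ (N_trunc _ rr')).
have [lower _] := andP (bN _ (N_trunc _ (lexx r))).
have rD0 : 0 < r ^+ D by rewrite exprn_gt0.
have lower' : c * (1 - eta) ^+ 2 * r ^+ D <= b (Num.truncn r).
  apply: le_trans lower; rewrite expr2 -!mulrA.
  apply: ler_wpM2l; first exact: ltW.
  apply: ler_wpM2l; first lra.
  apply: le_trans (truncn_expn_ge r D r1); apply: ler_wpM2r; [exact: ltW | lra].
have upper' : b (Num.truncn r') <= c * (1 + eta) * r' ^+ D.
  apply: le_trans upper _; apply: ler_wpM2l; first by apply: mulr_ge0; lra.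
  by apply: lerXn2r; rewrite ?nnegrE ?ler0n ?truncn_le //; lra.
have key : (1 + eta) * (c * r ^+ D) <= (1 + theta) * b (Num.truncn r).
  have theta1 : 0 <= 1 + theta by lra.
  apply: le_trans (ler_wpM2l theta1 lower').
  have -> : (1 + theta) * (c * (1 - eta) ^+ 2 * r ^+ D) =
            (1 + theta) * (1 - eta) ^+ 2 * (c * r ^+ D) by ring.
  by apply: ler_wpM2r => //; exact: mulr_ge0 (ltW c0) (ltW rD0).
have bn0 : 0 < b (Num.truncn r).
  apply: lt_le_trans lower'; apply: mulr_gt0 => //.
  by apply: mulr_gt0 => //; apply: exprn_gt0; lra.
rewrite ler_pdivrMr // expr_div_n; apply: le_trans upper' _.
have -> : c * (1 + eta) * r' ^+ D = r' ^+ D / r ^+ D * ((1 + eta) * (c * r ^+ D)).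
  by field; rewrite gt_eqF.
have -> : (1 + theta) * (r' ^+ D / r ^+ D) * b (Num.truncn r) =
          r' ^+ D / r ^+ D * ((1 + theta) * b (Num.truncn r)) by ring.
by apply: ler_wpM2l key; exact: divr_ge0 (exprn_ge0 _ (ltW r'0)) (ltW rD0).
Qed.

End Asymptotics.

Theorem lemma2p1 (R : realType) (G : eqType) (mul : G -> G -> G)
    (inv : G -> G) (one : G) (S : seq G) (D : nat) :
  is_group mul inv one ->
  symmetric_gen mul inv one S ->
  poly_growth R mul one S ->
  homogeneous_dim R mul one S D ->
  (exists c : R, 0 < c /\
     (fun n : nat => (ball_card mul one S one (n%:R : R))%:R / n%:R ^+ D)
       @ \oo --> c) ->
  forall theta : R, 0 < theta ->
  exists R0 : R, forall (p : G) (r Rr : R), R0 <= r -> r <= Rr ->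
    (ball_card mul one S p Rr)%:R / (ball_card mul one S p r)%:R
      <= (1 + theta) * (Rr / r) ^+ D.
Proof.
move=> group _ _ _ [c [c0 bc]] theta theta0.
have [R0 ratio] := ratio_truncn_le c0 bc _ theta0.
exists (Num.max R0 1) => p r Rr; rewrite ge_max => /andP[R0r r1] rRr.
have [r0 Rr0] : 0 <= r /\ 0 <= Rr by split; lra.
rewrite !(ball_card_translate group) (ball_card_truncn r0) (ball_card_truncn Rr0).
exact: ratio.
Qed.
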